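(* Let $V_k$ be the complex vector space spanned by all $\Gamma^\mu_r$ with $1\le r\le u-1$ and $\mu\in r-1+2\mathbb Z$. Then $V_k$ is spanned by $\{\Gamma^\mu_r:(\mu;r)\in\mathbf B_k\}$, where $\mathbf B_k$ is the set of pairs $(\mu;r)$ of integers with $\mu\equiv r-1\pmod 2$ and: if $u$ is odd, $0\le\mu\le w$ and $1\le r\le\frac{u-1}2$; if $u$ is even, either $0\le\mu\le w$ and $1\le r\le\frac u2-1$, or $0\le\mu\le\frac w2$ and $r=\frac u2$.
   Context: $u,v\in\mathbb Z_{\ge2}$ coprime with $u<2v$; $k=-2+u/v<0$, $w=2v-u$, $\mathbb L=2w\mathbb Z$. $\chi^{u,v}_{r,s}(q)=\eta(q)^{-1}\sum_{n\in\mathbb Z}(q^{(2uvn+vr-us)^2/4uv}-q^{(2uvn+vr+us)^2/4uv})$, $\eta$ Dedekind's eta. For $\mu\in\frac1v\mathbb Z$, $\theta'_{\mu+\mathbb L}(q)=-\frac1{2w}\sum_{\lambda\in\mu+\mathbb L}\lambda q^{-\lambda^2/4k}$. For $1\le r\le u-1$ and $\mu\in r-1+2\mathbb Z$, $$\Gamma^\mu_r(q)=\sum_{s=1}^{v-1}(-1)^{s-1}\frac{\chi^{u,v}_{r,s}(q)}{\eta(q)}\big[\theta'_{\mu+sk+\mathbb L}(q)-\theta'_{\mu-sk+\mathbb L}(q)\big].$$ *)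

From Stdlib Require Import Reals ZArith List ClassicalEpsilon.
Open Scope R_scope.

Record Cx : Type := mkC { Re : R; Im : R }.
Definition C0 : Cx := mkC 0 0.
Definition C1 : Cx := mkC 1 0.
Definition RtoC (a : R) : Cx := mkC a 0.
Definition Cadd (z w : Cx) : Cx := mkC (Re z + Re w) (Im z + Im w).
Definition Copp (z : Cx) : Cx := mkC (- Re z) (- Im z).
Definition Csub (z w : Cx) : Cx := Cadd z (Copp w).
Definition Cmul (z w : Cx) : Cx :=
  mkC (Re z * Re w - Im z * Im w) (Re z * Im w + Im z * Re w).
Definition Cinv (z : Cx) : Cx :=
  let n := Re z * Re z + Im z * Im z in mkC (Re z / n) (- Im z / n).
Definition Cdiv (z w : Cx) : Cx := Cmul z (Cinv w).
Definition Csum (l : list Cx) : Cx := fold_right Cadd C0 l.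

(** Limits of complex sequences (componentwise), and the chosen limit
    (an arbitrary value if the sequence diverges). *)
Definition Climit (s : nat -> Cx) (l : Cx) : Prop :=
  Un_cv (fun n => Re (s n)) (Re l) /\ Un_cv (fun n => Im (s n)) (Im l).
Definition Clim (s : nat -> Cx) : Cx :=
  epsilon (inhabits C0) (fun l => Climit s l).

Fixpoint zpsum (f : Z -> Cx) (N : nat) : Cx :=
  match N with
  | O => f 0%Z
  | S M => Cadd (zpsum f M)
                (Cadd (f (Z.of_nat (S M))) (f (- Z.of_nat (S M))%Z))
  end.
Definition zsum (f : Z -> Cx) : Cx := Clim (zpsum f).

(** * q-powers.  tau = x + i y in the upper half-plane (y > 0),
    q = e^{2 pi i tau}, and  q^a := e^{2 pi i a tau}  for real a. *)
Definition qpow (a x y : R) : Cx :=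
  mkC (exp (- 2 * PI * a * y) * cos (2 * PI * a * x))
      (exp (- 2 * PI * a * y) * sin (2 * PI * a * x)).

Fixpoint eta_pprod (x y : R) (N : nat) : Cx :=
  match N with
  | O => C1
  | S M => Cmul (eta_pprod x y M) (Csub C1 (qpow (INR (S M)) x y))
  end.
Definition eta (x y : R) : Cx := Cmul (qpow (1/24) x y) (Clim (eta_pprod x y)).

Definition chi (u v r s : Z) (x y : R) : Cx :=
  Cdiv
    (zsum (fun n =>
       Csub (qpow (IZR ((2*u*v*n + v*r - u*s)^2) / IZR (4*u*v)) x y)
            (qpow (IZR ((2*u*v*n + v*r + u*s)^2) / IZR (4*u*v)) x y)))
    (eta x y).

Definition klev (u v : Z) : R := -2 + IZR u / IZR v.
Definition wpar (u v : Z) : Z := (2*v - u)%Z.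

Definition theta' (u v : Z) (mu : R) (x y : R) : Cx :=
  Cmul (RtoC (- 1 / (2 * IZR (wpar u v))))
    (zsum (fun m =>
       let lam := mu + IZR (2 * wpar u v * m) in
       Cmul (RtoC lam) (qpow (- lam ^ 2 / (4 * klev u v)) x y))).

Definition Gamma (u v mu r : Z) (x y : R) : Cx :=
  Csum (map (fun n : nat =>
    let s := Z.of_nat n in
    let ks := IZR s * klev u v in
    Cmul (RtoC ((-1) ^ (n - 1)))
      (Cmul (Cdiv (chi u v r s x y) (eta x y))
            (Csub (theta' u v (IZR mu + ks) x y)
                  (theta' u v (IZR mu - ks) x y))))
    (seq 1 (Z.to_nat v - 1))).

Definition inBk (u v mu r : Z) : Prop :=
  Z.Even (mu - (r - 1)) /\
  ( (Z.Odd u /\ (0 <= mu <= wpar u v)%Z /\ (1 <= r)%Z /\ (2 * r <= u - 1)%Z)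
  \/ (Z.Even u /\
       ( ((0 <= mu <= wpar u v)%Z /\ (1 <= r)%Z /\ (2 * r <= u - 2)%Z)
       \/ ((0 <= mu)%Z /\ (2 * mu <= wpar u v)%Z /\ (2 * r = u)%Z)))).

From Pilot Require Import Defs.
From Stdlib Require Import Reals ZArith List Lia Lra.
From Stdlib Require Import FunctionalExtensionality PropExtensionality ClassicalEpsilon.
Open Scope R_scope.

(* Every [Gamma^mu_r] is a scalar multiple of one indexed by [B_k], by three
   symmetries.  Since [theta'_{a+L}] only depends on [a + L] and is odd in [a],
   [Gamma^mu_r] is [2w]-periodic and even in [mu].  Reindexing [s -> v - s] and
   using [chi_{u-r,v-s} = chi_{r,s}] together with [v k = -w] gives
   [Gamma^mu_{u-r} = -(-1)^v Gamma^{mu-w}_r].  These move [r] into [1 <= 2 r <= u]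
   and [mu] into [[0, w]]; for [2 r = u] the last symmetry also sends [mu] to
   [w - mu], hence into [[0, w/2]].  The only analysis needed is that the lattice
   sums may be shifted and reflected, which holds because their terms decay like
   a Gaussian ([k < 0], [Im tau > 0]). *)

Lemma Cx_eq (z w : Cx) : Re z = Re w -> Im z = Im w -> z = w.
Proof. destruct z, w; simpl; intros; subst; reflexivity. Qed.

Ltac Cx_ring := apply Cx_eq; simpl; ring.

Lemma zpsum_ext (f g : Z -> Cx) N : (forall m, f m = g m) -> zpsum f N = zpsum g N.
Proof. intro E; induction N as [|N IH]; simpl; rewrite ?IH, !E; reflexivity. Qed.

Lemma zpsum_Csub (f g : Z -> Cx) N :
  zpsum (fun m => Csub (f m) (g m)) N = Csub (zpsum f N) (zpsum g N).
Proof. induction N as [|N IH]; simpl; [reflexivity|]. rewrite IH; Cx_ring. Qed.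

Lemma zpsum_Copp (f : Z -> Cx) N : zpsum (fun m => Copp (f m)) N = Copp (zpsum f N).
Proof. induction N as [|N IH]; simpl; [reflexivity|]. rewrite IH; Cx_ring. Qed.

Lemma zpsum_reflect (f : Z -> Cx) N : zpsum (fun m => f (- m)%Z) N = zpsum f N.
Proof.
  induction N as [|N IH]; simpl; [reflexivity|].
  rewrite IH; Cx_ring.
Qed.

Lemma zpsum_succ_index (f : Z -> Cx) N :
  zpsum (fun m => f (m + 1)%Z) N
  = Cadd (Csub (zpsum f N) (f (- Z.of_nat N)%Z)) (f (Z.of_nat N + 1)%Z).
Proof.
  induction N as [|N IH]; [Cx_ring|].
  cbn [zpsum]; rewrite IH.
  replace (Z.of_nat (S N)) with (Z.of_nat N + 1)%Z by lia.
  replace (- (Z.of_nat N + 1) + 1)%Z with (- Z.of_nat N)%Z by lia.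
  replace (Z.of_nat N + 1 + 1)%Z with (Z.of_nat (S N) + 1)%Z by lia.
  replace (Z.of_nat (S N)) with (Z.of_nat N + 1)%Z by lia.
  Cx_ring.
Qed.

Lemma zpsum_reflect_pred (f : Z -> Cx) N :
  zpsum (fun m => f (- m - 1)%Z) N
  = Cadd (Csub (zpsum f N) (f (Z.of_nat N))) (f (- Z.of_nat N - 1)%Z).
Proof.
  set (g m := f (m - 1)%Z).
  rewrite (zpsum_ext _ (fun m => g (- m)%Z)) by (intro; unfold g; f_equal; lia).
  rewrite zpsum_reflect.
  assert (E := zpsum_succ_index g N).
  rewrite (zpsum_ext _ f) in E by (intro; unfold g; f_equal; lia).
  rewrite E; unfold g; replace (Z.of_nat N + 1 - 1)%Z with (Z.of_nat N) by lia.
  Cx_ring.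
Qed.

Definition zpair (g : Z -> R) (j : nat) : R :=
  match j with
  | O => g 0%Z
  | S _ => g (Z.of_nat j) + g (- Z.of_nat j)%Z
  end.

Lemma Re_zpsum (f : Z -> Cx) N : Re (zpsum f N) = sum_f_R0 (zpair (fun m => Re (f m))) N.
Proof. induction N as [|N IH]; simpl; rewrite ?IH; reflexivity. Qed.

Lemma Im_zpsum (f : Z -> Cx) N : Im (zpsum f N) = sum_f_R0 (zpair (fun m => Im (f m))) N.
Proof. induction N as [|N IH]; simpl; rewrite ?IH; reflexivity. Qed.

Lemma zsum_ext (f g : Z -> Cx) : (forall m, f m = g m) -> zsum f = zsum g.
Proof. intro E; f_equal; apply functional_extensionality; exact E. Qed.

Lemma Climit_ext (s s' : nat -> Cx) l : (forall N, s N = s' N) -> Climit s l -> Climit s' l.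
Proof.
  intros E [H1 H2]; split; [eapply Un_cv_ext, H1 | eapply Un_cv_ext, H2];
    intro; cbv beta; rewrite E; reflexivity.
Qed.

Lemma Clim_spec (s : nat -> Cx) l : Climit s l -> Clim s = l.
Proof.
  intro H. unfold Clim.
  destruct (epsilon_spec (inhabits C0) (fun l => Climit s l) (ex_intro _ l H)) as [H1 H2].
  destruct H as [H3 H4].
  apply Cx_eq; eapply UL_sequence; eauto.
Qed.

Lemma Climit_sub0 (a b : nat -> Cx) :
  Climit a C0 -> Climit b C0 -> Climit (fun N => Csub (a N) (b N)) C0.
Proof.
  intros [Ha1 Ha2] [Hb1 Hb2]; simpl in *.
  split; simpl; rewrite <- (Rminus_diag 0).
  - eapply Un_cv_ext; [| exact (CV_minus _ _ _ _ Ha1 Hb1)]; intro; simpl; ring.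
  - eapply Un_cv_ext; [| exact (CV_minus _ _ _ _ Ha2 Hb2)]; intro; simpl; ring.
Qed.

Lemma Clim_eq_of_sub (s s' : nat -> Cx) :
  Climit (fun N => Csub (s' N) (s N)) C0 -> Clim s' = Clim s.
Proof.
  intros [D1 D2]; simpl in *. unfold Clim. f_equal.
  apply functional_extensionality; intro l.
  apply propositional_extensionality; split; intros [A B].
  - split; [rewrite <- (Rminus_0_r (Re l)) | rewrite <- (Rminus_0_r (Im l))].
    + eapply Un_cv_ext; [| exact (CV_minus _ _ _ _ A D1)]; intro; simpl; ring.
    + eapply Un_cv_ext; [| exact (CV_minus _ _ _ _ B D2)]; intro; simpl; ring.
  - split; [rewrite <- (Rplus_0_r (Re l)) | rewrite <- (Rplus_0_r (Im l))].
    + eapply Un_cv_ext; [| exact (CV_plus _ _ _ _ A D1)]; intro; simpl; ring.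
    + eapply Un_cv_ext; [| exact (CV_plus _ _ _ _ B D2)]; intro; simpl; ring.
Qed.

Lemma Clim_opp (s : nat -> Cx) :
  (exists l, Climit s l) -> Clim (fun N => Copp (s N)) = Copp (Clim s).
Proof.
  intros [l [H1 H2]].
  rewrite (Clim_spec s l) by (split; assumption).
  apply Clim_spec; split; simpl; apply CV_opp; assumption.
Qed.

Lemma Csum_app (l1 l2 : list Cx) : Csum (l1 ++ l2) = Cadd (Csum l1) (Csum l2).
Proof. induction l1 as [|z l1 IH]; simpl; [|rewrite IH]; Cx_ring. Qed.

Lemma Csum_map_scale {A : Type} (c : Cx) (f : A -> Cx) (l : list A) :
  Cmul c (Csum (map f l)) = Csum (map (fun t => Cmul c (f t)) l).
Proof. induction l as [|t l IH]; simpl; [|rewrite <- IH]; Cx_ring. Qed.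

Lemma Csum_map_seq_rev (f : nat -> Cx) n :
  Csum (map f (seq 1 n)) = Csum (map (fun i => f (S n - i)%nat) (seq 1 n)).
Proof.
  induction n as [|n IH]; [reflexivity|].
  transitivity (Cadd (f (S n)) (Csum (map f (seq 1 n)))).
  - rewrite seq_S, map_app, Csum_app; simpl; Cx_ring.
  - rewrite IH; change (seq 1 (S n)) with (1%nat :: seq 2 n); cbn [map Csum].
    rewrite <- (seq_shift n 1), map_map; reflexivity.
Qed.

Lemma pow_minus_one_reflect V i : (1 <= i <= V - 1)%nat ->
  (-1) ^ (V - i - 1) = (-1) ^ V * (-1) ^ (i - 1).
Proof.
  intro Hi.
  assert (Hsq : (-1) ^ (i - 1) * (-1) ^ (i - 1) = 1)
    by (rewrite <- pow_add, <- pow_1_even with (i - 1)%nat; f_equal; lia).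
  replace V with ((V - i - 1) + (i - 1) + 2)%nat at 2 by lia.
  rewrite !pow_add.
  transitivity ((-1) ^ (V - i - 1) * ((-1) ^ (i - 1) * (-1) ^ (i - 1)));
    [rewrite Hsq | simpl]; ring.
Qed.

Definition geometric_decay (f : Z -> Cx) : Prop :=
  exists B rho, 0 < rho < 1 /\ forall m,
    Rabs (Re (f m)) <= B * rho ^ Z.abs_nat m /\ Rabs (Im (f m)) <= B * rho ^ Z.abs_nat m.

Lemma geometric_decay_ext (f g : Z -> Cx) :
  (forall m, f m = g m) -> geometric_decay f -> geometric_decay g.
Proof.
  intros E [B [rho [Hr H]]]; exists B, rho; split; [exact Hr|].
  intro m; rewrite <- E; auto.
Qed.

Lemma pow_le_compat_le1 (rho : R) n k : 0 <= rho <= 1 -> (n <= k)%nat -> rho ^ k <= rho ^ n.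
Proof.
  intros Hr Hk; induction Hk as [|k Hk IH]; [lra|].
  simpl; pose proof (pow_le rho k (proj1 Hr)); nra.
Qed.

Lemma geometric_bound_cv0 (g : nat -> R) B rho :
  0 < rho < 1 -> (forall N, Rabs (g N) <= B * rho ^ N) -> Un_cv g 0.
Proof.
  intros Hr H eps He.
  assert (HB : 0 <= B) by (specialize (H O); simpl in H; pose proof (Rabs_pos (g O)); lra).
  destruct (pow_lt_1_zero rho) with (y := eps / (B + 1)) as [N HN];
    [rewrite Rabs_right; lra | apply Rdiv_lt_0_compat; lra |].
  exists N; intros n Hn; unfold R_dist; rewrite Rminus_0_r.
  specialize (HN n Hn); rewrite Rabs_right in HN by (apply Rle_ge, pow_le; lra).
  apply (Rmult_lt_compat_l (B + 1)) in HN; [|lra].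
  replace ((B + 1) * (eps / (B + 1))) with eps in HN by (field; lra).
  pose proof (pow_le rho n); pose proof (H n); nra.
Qed.

Lemma decay_limit0 (f : Z -> Cx) (h : nat -> Z) :
  geometric_decay f -> (forall N, (N <= Z.abs_nat (h N))%nat) ->
  Climit (fun N => f (h N)) C0.
Proof.
  intros [B [rho [Hr H]]] Hh.
  assert (HB : 0 <= B)
    by (destruct (H 0%Z) as [H0 _]; simpl in H0; pose proof (Rabs_pos (Re (f 0%Z))); lra).
  assert (Hmono : forall N, B * rho ^ Z.abs_nat (h N) <= B * rho ^ N)
    by (intro N; apply Rmult_le_compat_l, pow_le_compat_le1; auto; lra).
  split; apply (geometric_bound_cv0 _ B rho Hr); intro N;
    destruct (H (h N)); specialize (Hmono N); simpl; lra.
Qed.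

Lemma zpair_series_cv (g : Z -> R) B rho :
  0 < rho < 1 -> (forall m, Rabs (g m) <= B * rho ^ Z.abs_nat m) ->
  exists l, Un_cv (sum_f_R0 (zpair g)) l.
Proof.
  intros Hr H.
  assert (HB : 0 <= B) by (specialize (H 0%Z); simpl in H; pose proof (Rabs_pos (g 0%Z)); lra).
  assert (Hpair : forall j, 0 <= Rabs (zpair g j) <= 2 * B * rho ^ j).
  { intro j; split; [apply Rabs_pos|].
    pose proof (pow_le rho j).
    destruct j as [|j]; cbn [zpair].
    - specialize (H 0%Z); simpl in *; lra.
    - pose proof (H (Z.of_nat (S j))) as H1; pose proof (H (- Z.of_nat (S j))%Z) as H2.
      replace (Z.abs_nat (Z.of_nat (S j))) with (S j) in H1 by lia.
      replace (Z.abs_nat (- Z.of_nat (S j))) with (S j) in H2 by lia.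
      pose proof (Rabs_triang (g (Z.of_nat (S j))) (g (- Z.of_nat (S j))%Z)); lra. }
  assert (Hgeom : {l | Un_cv (sum_f_R0 (fun j => 2 * B * rho ^ j)) l}).
  { assert (Hconst : Un_cv (fun _ => 2 * B) (2 * B))
      by (intros eps He; exists O; intros; unfold R_dist; rewrite Rminus_diag, Rabs_R0; lra).
    exists (2 * B * / (1 - rho)).
    eapply Un_cv_ext;
      [| exact (CV_mult _ _ _ _ Hconst (GP_infinite rho ltac:(rewrite Rabs_right; lra)))].
    intro n; cbv beta; rewrite scal_sum; apply sum_eq; intros; ring. }
  destruct (Rseries_CV_comp _ _ Hpair Hgeom) as [l1 Hl1].
  destruct (cv_cauchy_2 _ (cauchy_abs _ (cv_cauchy_1 _ (exist _ l1 Hl1)))) as [l Hl].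
  exists l; exact Hl.
Qed.

Lemma decay_zsummable (f : Z -> Cx) : geometric_decay f -> exists l, Climit (zpsum f) l.
Proof.
  intros [B [rho [Hr H]]].
  destruct (zpair_series_cv (fun m => Re (f m)) B rho Hr (fun m => proj1 (H m))) as [l1 H1].
  destruct (zpair_series_cv (fun m => Im (f m)) B rho Hr (fun m => proj2 (H m))) as [l2 H2].
  exists (mkC l1 l2); split; simpl.
  - eapply Un_cv_ext; [| exact H1]; intro; rewrite Re_zpsum; reflexivity.
  - eapply Un_cv_ext; [| exact H2]; intro; rewrite Im_zpsum; reflexivity.
Qed.

Lemma zsum_succ_index (f : Z -> Cx) :
  geometric_decay f -> zsum (fun m => f (m + 1)%Z) = zsum f.
Proof.
  intro Hf; apply Clim_eq_of_sub.
  apply Climit_ext with (fun N => Csub (f (Z.of_nat N + 1)%Z) (f (- Z.of_nat N)%Z)).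
  - intro N; rewrite zpsum_succ_index; Cx_ring.
  - apply Climit_sub0; apply decay_limit0; auto; intro; lia.
Qed.

Lemma zsum_Copp_reflect (f : Z -> Cx) :
  geometric_decay f -> zsum (fun m => Copp (f (- m)%Z)) = Copp (zsum f).
Proof.
  intro Hf; unfold zsum.
  rewrite <- Clim_opp by exact (decay_zsummable f Hf).
  f_equal; apply functional_extensionality; intro N.
  rewrite zpsum_Copp, zpsum_reflect; reflexivity.
Qed.

Lemma exp_mult_INR x n : exp (x * INR n) = exp x ^ n.
Proof.
  induction n as [|n IH]; [simpl; rewrite Rmult_0_r, exp_0; reflexivity|].
  rewrite S_INR, Rmult_plus_distr_l, Rmult_1_r, exp_plus, IH; simpl; ring.
Qed.

Lemma exp_le_exp x y : x <= y -> exp x <= exp y.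
Proof. intros [H | ->]; [left; apply exp_increasing, H | right; reflexivity]. Qed.

Lemma lattice_point_growth d a m : 0 < d ->
  d * INR (Z.abs_nat m) <= Rabs (a + d * IZR m) + Rabs a.
Proof.
  intro Hd.
  replace (INR (Z.abs_nat m)) with (Rabs (IZR m))
    by (rewrite <- abs_IZR, INR_IZR_INZ, Nat2Z.inj_abs_nat; reflexivity).
  replace (d * Rabs (IZR m)) with (Rabs ((a + d * IZR m) - a))
    by (replace (a + d * IZR m - a) with (d * IZR m) by ring;
        rewrite Rabs_mult, (Rabs_right d) by lra; reflexivity).
  unfold Rminus; rewrite <- (Rabs_Ropp a); apply Rabs_triang.
Qed.

Lemma gaussian_lattice_decay c d a : 0 < c -> 0 < d ->
  exists K, forall m : Z,
    (1 + Rabs (a + d * IZR m)) * exp (- c * (a + d * IZR m) ^ 2)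
    <= K * exp (- (c * d)) ^ Z.abs_nat m.
Proof.
  intros Hc Hd.
  exists (exp c * (1 + / c) * exp (c * Rabs a)); intro m.
  pose proof (lattice_point_growth d a m Hd) as Hgrowth.
  rewrite <- pow2_abs, <- exp_mult_INR.
  set (t := Rabs (a + d * IZR m)) in *; set (M := INR (Z.abs_nat m)) in *.
  assert (Ht : 0 <= t) by apply Rabs_pos.
  (* [-c t^2 <= c - 2 c t] since [c (t - 1)^2 >= 0] *)
  assert (Hsq : exp (- c * t ^ 2) <= exp c * exp (- (c * t)) * exp (- (c * t))).
  { rewrite <- !exp_plus; apply exp_le_exp.
    assert (0 <= c * (t - 1) ^ 2) by (apply Rmult_le_pos; [lra | apply pow2_ge_0]); nra. }
  assert (Hlin : (1 + t) * exp (- (c * t)) <= 1 + / c).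
  { assert (exp (- (c * t)) <= 1) by (rewrite <- exp_0; apply exp_le_exp; nra).
    assert (t * exp (- (c * t)) <= / c).
    { pose proof (exp_ineq1_le (c * t)); pose proof (exp_pos (c * t)).
      rewrite exp_Ropp; apply (Rmult_le_reg_l (c * exp (c * t))); [nra|].
      field_simplify; [nra | lra | lra]. }
    lra. }
  assert (Htail : exp (- (c * t)) <= exp (c * Rabs a) * exp (- (c * d) * M)).
  { rewrite <- exp_plus; apply exp_le_exp; nra. }
  pose proof (exp_pos c); pose proof (exp_pos (- (c * t))).
  apply Rle_trans with (exp c * ((1 + t) * exp (- (c * t))) * exp (- (c * t))).
  { replace (exp c * ((1 + t) * exp (- (c * t))) * exp (- (c * t)))
      with ((1 + t) * (exp c * exp (- (c * t)) * exp (- (c * t)))) by ring.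
    apply Rmult_le_compat_l; lra. }
  apply Rle_trans with (exp c * (1 + / c) * exp (- (c * t))).
  { apply Rmult_le_compat_r; [lra|]; apply Rmult_le_compat_l; lra. }
  assert (0 < / c) by (apply Rinv_0_lt_compat; lra).
  replace (exp c * (1 + / c) * exp (c * Rabs a) * exp (- (c * d) * M))
    with (exp c * (1 + / c) * (exp (c * Rabs a) * exp (- (c * d) * M))) by ring.
  apply Rmult_le_compat_l; [nra | exact Htail].
Qed.

Lemma qpow_bound e x y :
  Rabs (Re (qpow e x y)) <= exp (-2 * PI * e * y) /\
  Rabs (Im (qpow e x y)) <= exp (-2 * PI * e * y).
Proof.
  unfold qpow; simpl; pose proof (exp_pos (-2 * PI * e * y)).
  rewrite !Rabs_mult, (Rabs_right (exp _)) by lra.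
  pose proof (COS_bound (2 * PI * e * x)); pose proof (SIN_bound (2 * PI * e * x)).
  split; rewrite <- (Rmult_1_r (exp _)) at 2;
    (apply Rmult_le_compat_l; [lra | apply Rabs_le; lra]).
Qed.

Lemma qpow_gaussian_decay (kappa d a : R) (coef : R -> R) x y :
  0 < kappa -> 0 < d -> 0 < y -> (forall L, Rabs (coef L) <= 1 + Rabs L) ->
  geometric_decay (fun m =>
    Cmul (RtoC (coef (a + d * IZR m))) (qpow (kappa * (a + d * IZR m) ^ 2) x y)).
Proof.
  intros Hkappa Hd Hy Hcoef.
  set (c := 2 * PI * kappa * y).
  assert (Hc : 0 < c) by (unfold c; pose proof PI_RGT_0; apply Rmult_lt_0_compat; nra).
  destruct (gaussian_lattice_decay c d a Hc Hd) as [K HK].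
  exists K, (exp (- (c * d))); split.
  { split; [apply exp_pos|]; rewrite <- exp_0; apply exp_increasing; nra. }
  intro m; set (L := a + d * IZR m) in *.
  destruct (qpow_bound (kappa * L ^ 2) x y) as [H1 H2].
  replace (-2 * PI * (kappa * L ^ 2) * y) with (- c * L ^ 2) in H1, H2 by (unfold c; ring).
  specialize (HK m); specialize (Hcoef L); fold L in HK.
  pose proof (Rabs_pos (coef L)); pose proof (exp_pos (- c * L ^ 2)).
  assert (Hbound : forall z, Rabs z <= exp (- c * L ^ 2) ->
                   Rabs (coef L * z) <= K * exp (- (c * d)) ^ Z.abs_nat m).
  { intros z Hz; rewrite Rabs_mult; pose proof (Rabs_pos z).
    apply Rle_trans with ((1 + Rabs L) * exp (- c * L ^ 2)); [|exact HK].
    apply Rmult_le_compat; auto. }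
  split; simpl; [rewrite Rmult_0_l, Rminus_0_r | rewrite Rmult_0_l, Rplus_0_r]; auto.
Qed.

Section Symmetries.

Variables u v : Z.
Hypotheses (hu : (0 < u)%Z) (huv : (u < 2 * v)%Z).

Lemma wpar_pos : (0 < wpar u v)%Z.
Proof. unfold wpar; lia. Qed.

Lemma klev_neg : klev u v < 0.
Proof.
  unfold klev.
  assert (Hv : 0 < IZR v) by (apply IZR_lt; lia).
  assert (IZR u < 2 * IZR v) by (rewrite <- mult_IZR; apply IZR_lt; lia).
  assert (IZR u / IZR v < 2)
    by (apply (Rmult_lt_reg_r (IZR v)); [exact Hv|]; field_simplify; lra).
  lra.
Qed.

Lemma klev_mul_v : IZR v * klev u v = - IZR (wpar u v).
Proof.
  assert (IZR v <> 0) by (apply not_0_IZR; lia).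
  unfold klev, wpar; rewrite minus_IZR, mult_IZR; field; assumption.
Qed.

Definition theta_summand (a x y : R) (m : Z) : Cx :=
  let lam := a + IZR (2 * wpar u v * m) in
  Cmul (RtoC lam) (qpow (- lam ^ 2 / (4 * klev u v)) x y).

Definition chi_summand (p : Z) (x y : R) (n : Z) : Cx :=
  qpow (IZR ((2 * u * v * n + p) ^ 2) / IZR (4 * u * v)) x y.

Section FixedTau.

Variables x y : R.
Hypothesis hy : 0 < y.

Lemma theta_summand_decay a : geometric_decay (theta_summand a x y).
Proof.
  pose proof klev_neg; pose proof wpar_pos.
  eapply geometric_decay_ext;
    [| apply (qpow_gaussian_decay (- / (4 * klev u v)) (IZR (2 * wpar u v)) a id x y)].
  - intro m; unfold theta_summand, id; rewrite (mult_IZR _ m).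
    f_equal; f_equal; field; lra.
  - apply Ropp_0_gt_lt_contravar, Rinv_lt_0_compat; lra.
  - apply IZR_lt; lia.
  - exact hy.
  - intro; unfold id; lra.
Qed.

Lemma chi_summand_decay p : geometric_decay (chi_summand p x y).
Proof.
  assert (H4 : 0 < IZR (4 * u * v)) by (apply IZR_lt; nia).
  eapply geometric_decay_ext;
    [| apply (qpow_gaussian_decay (/ IZR (4 * u * v)) (IZR (2 * u * v)) (IZR p) (fun _ => 1) x y)].
  - intro m; unfold chi_summand.
    replace (IZR ((2 * u * v * m + p) ^ 2) / IZR (4 * u * v))
      with (/ IZR (4 * u * v) * (IZR p + IZR (2 * u * v) * IZR m) ^ 2)
      by (rewrite <- (pow_IZR _ 2), plus_IZR, (mult_IZR _ m); field; lra).
    Cx_ring.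
  - apply Rinv_0_lt_compat, H4.
  - apply IZR_lt; nia.
  - exact hy.
  - intro L; rewrite Rabs_R1; pose proof (Rabs_pos L); lra.
Qed.

Lemma theta'_as_zsum a :
  theta' u v a x y = Cmul (RtoC (- 1 / (2 * IZR (wpar u v)))) (zsum (theta_summand a x y)).
Proof. reflexivity. Qed.

Lemma theta'_periodic a : theta' u v (a + IZR (2 * wpar u v)) x y = theta' u v a x y.
Proof.
  rewrite !theta'_as_zsum; f_equal.
  rewrite (zsum_ext _ (fun m => theta_summand a x y (m + 1))).
  - apply zsum_succ_index, theta_summand_decay.
  - intro m; unfold theta_summand.
    replace (IZR (2 * wpar u v * (m + 1))) with (IZR (2 * wpar u v) + IZR (2 * wpar u v * m))
      by (rewrite !mult_IZR, plus_IZR; ring).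
    rewrite Rplus_assoc; reflexivity.
Qed.

Lemma theta'_odd a : theta' u v (- a) x y = Copp (theta' u v a x y).
Proof.
  rewrite !theta'_as_zsum.
  rewrite (zsum_ext _ (fun m => Copp (theta_summand a x y (- m)))).
  - rewrite zsum_Copp_reflect by apply theta_summand_decay; Cx_ring.
  - intro m; unfold theta_summand.
    replace (- a + IZR (2 * wpar u v * m)) with (- (a + IZR (2 * wpar u v * - m)))
      by (rewrite !mult_IZR, opp_IZR; ring).
    replace ((- (a + IZR (2 * wpar u v * - m))) ^ 2) with ((a + IZR (2 * wpar u v * - m)) ^ 2)
      by ring.
    Cx_ring.
Qed.

Lemma chi_as_zsum r s : chi u v r s x y =
  Cdiv (zsum (fun n => Csub (chi_summand (v * r - u * s) x y n)
                            (chi_summand (v * r + u * s) x y n)))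
       (eta x y).
Proof.
  unfold chi; f_equal; apply zsum_ext; intro n; unfold chi_summand.
  do 5 f_equal; ring.
Qed.

(* Under [(r, s) -> (u - r, v - s)] the two Gaussian series become the original ones
   reindexed by [n -> -n] and [n -> -n - 1]. *)
Lemma chi_reflect r s : chi u v (u - r) (v - s) x y = chi u v r s x y.
Proof.
  rewrite !chi_as_zsum; f_equal.
  set (A := chi_summand (v * r - u * s) x y); set (B := chi_summand (v * r + u * s) x y).
  rewrite (zsum_ext _ (fun n => Csub (A (- n)%Z) (B (- n - 1)%Z))).
  2:{ intro n; unfold A, B, chi_summand; f_equal; do 3 f_equal; ring. }
  apply Clim_eq_of_sub.
  apply Climit_ext with (fun N => Csub (B (Z.of_nat N)) (B (- Z.of_nat N - 1)%Z)).
  - intro N; rewrite !zpsum_Csub, zpsum_reflect, zpsum_reflect_pred; Cx_ring.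
  - apply Climit_sub0; apply decay_limit0; try apply chi_summand_decay; intro; lia.
Qed.

Definition Gamma_term (mu r : Z) (n : nat) : Cx :=
  let s := Z.of_nat n in
  let ks := IZR s * klev u v in
  Cmul (RtoC ((-1) ^ (n - 1)))
    (Cmul (Cdiv (chi u v r s x y) (eta x y))
          (Csub (theta' u v (IZR mu + ks) x y) (theta' u v (IZR mu - ks) x y))).

Lemma Gamma_as_sum mu r :
  Gamma u v mu r x y = Csum (map (Gamma_term mu r) (seq 1 (Z.to_nat v - 1))).
Proof. reflexivity. Qed.

Lemma Gamma_periodic_step mu r : Gamma u v (mu + 2 * wpar u v) r x y = Gamma u v mu r x y.
Proof.
  rewrite !Gamma_as_sum; f_equal; apply map_ext; intro n; unfold Gamma_term; cbv zeta.
  rewrite plus_IZR.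
  replace (IZR mu + IZR (2 * wpar u v) + IZR (Z.of_nat n) * klev u v)
    with (IZR mu + IZR (Z.of_nat n) * klev u v + IZR (2 * wpar u v)) by ring.
  replace (IZR mu + IZR (2 * wpar u v) - IZR (Z.of_nat n) * klev u v)
    with (IZR mu - IZR (Z.of_nat n) * klev u v + IZR (2 * wpar u v)) by ring.
  rewrite !theta'_periodic; reflexivity.
Qed.

Lemma Gamma_periodic q mu r : Gamma u v (mu + 2 * wpar u v * q) r x y = Gamma u v mu r x y.
Proof.
  revert mu; induction q as [|q IH|q IH] using Z.peano_ind; intro mu.
  - rewrite Z.mul_0_r, Z.add_0_r; reflexivity.
  - rewrite <- (IH mu), <- (Gamma_periodic_step (mu + 2 * wpar u v * q)); f_equal; lia.
  - rewrite <- (IH mu), <- (Gamma_periodic_step (mu + 2 * wpar u v * Z.pred q)); f_equal; lia.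
Qed.

Lemma Gamma_even mu r : Gamma u v (- mu) r x y = Gamma u v mu r x y.
Proof.
  rewrite !Gamma_as_sum; f_equal; apply map_ext; intro n; unfold Gamma_term; cbv zeta.
  rewrite opp_IZR.
  replace (- IZR mu + IZR (Z.of_nat n) * klev u v)
    with (- (IZR mu - IZR (Z.of_nat n) * klev u v)) by ring.
  replace (- IZR mu - IZR (Z.of_nat n) * klev u v)
    with (- (IZR mu + IZR (Z.of_nat n) * klev u v)) by ring.
  rewrite !theta'_odd; Cx_ring.
Qed.

(* Reindex [s -> v - s]: [chi] is invariant, and since [v k = - w] the two theta
   arguments become [mu - w -/+ s k] up to a period [2 w]. *)
Lemma Gamma_reflect mu r :
  Gamma u v mu (u - r) x y = Cmul (RtoC (- (-1) ^ Z.to_nat v)) (Gamma u v (mu - wpar u v) r x y).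
Proof.
  rewrite !Gamma_as_sum, Csum_map_scale, Csum_map_seq_rev.
  replace (S (Z.to_nat v - 1)) with (Z.to_nat v) by lia.
  f_equal; apply map_ext_in; intros i Hi; apply in_seq in Hi.
  unfold Gamma_term; cbv zeta.
  replace (Z.of_nat (Z.to_nat v - i)) with (v - Z.of_nat i)%Z by lia.
  rewrite chi_reflect.
  pose proof klev_mul_v.
  replace (IZR mu + IZR (v - Z.of_nat i) * klev u v)
    with (IZR (mu - wpar u v) - IZR (Z.of_nat i) * klev u v) by (rewrite !minus_IZR; lra).
  replace (IZR mu - IZR (v - Z.of_nat i) * klev u v)
    with (IZR (mu - wpar u v) + IZR (Z.of_nat i) * klev u v + IZR (2 * wpar u v))
    by (rewrite !minus_IZR, mult_IZR; lra).
  rewrite theta'_periodic, pow_minus_one_reflect by lia; Cx_ring.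
Qed.

End FixedTau.

Definition Gamma_multiple (mu r mu' r' : Z) : Prop :=
  exists c, forall x y, 0 < y -> Gamma u v mu r x y = Cmul c (Gamma u v mu' r' x y).

Lemma Gamma_multiple_of_eq mu r mu' r' :
  (forall x y, 0 < y -> Gamma u v mu r x y = Gamma u v mu' r' x y) ->
  Gamma_multiple mu r mu' r'.
Proof. intro E; exists Defs.C1; intros x y Hy; rewrite E by exact Hy; Cx_ring. Qed.

Lemma Gamma_multiple_trans mu r mu' r' mu'' r'' :
  Gamma_multiple mu r mu' r' -> Gamma_multiple mu' r' mu'' r'' -> Gamma_multiple mu r mu'' r''.
Proof.
  intros [c1 E1] [c2 E2]; exists (Cmul c1 c2); intros x y Hy.
  rewrite E1, E2 by exact Hy; Cx_ring.
Qed.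

Lemma Gamma_multiple_reflect mu r : Gamma_multiple mu (u - r) (mu - wpar u v) r.
Proof. eexists; intros x y Hy; apply Gamma_reflect, Hy. Qed.

Lemma Gamma_reduce_r mu r : (1 <= r <= u - 1)%Z -> Z.Even (mu - (r - 1)) ->
  exists mu' r', (1 <= r')%Z /\ (2 * r' <= u)%Z /\ Z.Even (mu' - (r' - 1)) /\
                 Gamma_multiple mu r mu' r'.
Proof.
  intros Hr [k Hk].
  destruct (Z_le_gt_dec (2 * r) u).
  - exists mu, r; repeat split; try lia.
    + exists k; exact Hk.
    + apply Gamma_multiple_of_eq; reflexivity.
  - exists (mu - wpar u v)%Z, (u - r)%Z; repeat split; try lia.
    + exists (k + r - v)%Z; unfold wpar; lia.
    + replace r with (u - (u - r))%Z at 1 by lia; apply Gamma_multiple_reflect.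
Qed.

Lemma Gamma_reduce_mu mu r : exists mu', (0 <= mu' <= wpar u v)%Z /\ Z.Even (mu - mu') /\
  forall x y, 0 < y -> Gamma u v mu r x y = Gamma u v mu' r x y.
Proof.
  pose proof wpar_pos as Hw.
  set (w := wpar u v) in *.
  pose proof (Z.div_mod mu (2 * w) ltac:(lia)) as Hdm.
  pose proof (Z.mod_pos_bound mu (2 * w) ltac:(lia)) as Hmod.
  set (q := (mu / (2 * w))%Z) in *; set (mu0 := (mu mod (2 * w))%Z) in *.
  assert (E0 : forall x y, 0 < y -> Gamma u v mu r x y = Gamma u v mu0 r x y)
    by (intros x y Hy; rewrite Hdm, <- (Gamma_periodic x y Hy q mu0); f_equal; lia).
  destruct (Z_le_gt_dec mu0 w).
  - exists mu0; repeat split; try lia; [exists (w * q)%Z; lia | exact E0].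
  - exists (- mu0 + 2 * w * 1)%Z; repeat split; try lia; [exists (w * q + mu0 - w)%Z; lia|].
    intros x y Hy; rewrite E0, Gamma_periodic, Gamma_even by exact Hy; reflexivity.
Qed.

(* For [r = u/2] the reflection [r -> u - r] fixes [r] and acts as [mu -> mu - w]. *)
Lemma Gamma_reduce_middle mu r : (2 * r = u)%Z -> (0 <= mu <= wpar u v)%Z ->
  exists mu', (0 <= mu')%Z /\ (2 * mu' <= wpar u v)%Z /\ Z.Even (mu - mu') /\
              Gamma_multiple mu r mu' r.
Proof.
  intros Hr Hmu.
  destruct (Z_le_gt_dec (2 * mu) (wpar u v)).
  - exists mu; repeat split; try lia; [exists 0%Z; lia | apply Gamma_multiple_of_eq; reflexivity].
  - exists (wpar u v - mu)%Z; repeat split; try lia; [exists (mu - v + r)%Z; unfold wpar; lia|].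
    replace r with (u - r)%Z at 1 by lia.
    eapply Gamma_multiple_trans; [apply Gamma_multiple_reflect|].
    apply Gamma_multiple_of_eq; intros x y Hy.
    rewrite <- Gamma_even by exact Hy; f_equal; lia.
Qed.

Lemma Gamma_reduce_to_Bk mu r : (1 <= r <= u - 1)%Z -> Z.Even (mu - (r - 1)) ->
  exists mu' r', inBk u v mu' r' /\ Gamma_multiple mu r mu' r'.
Proof.
  intros Hr Hpar.
  destruct (Gamma_reduce_r mu r Hr Hpar) as (mu1 & r1 & Hr1 & Hr1u & [k1 Hk1] & M1).
  destruct (Gamma_reduce_mu mu1 r1) as (mu2 & Hmu2 & [k2 Hk2] & E2).
  assert (M2 : Gamma_multiple mu r mu2 r1)
    by (eapply Gamma_multiple_trans; [exact M1 | apply Gamma_multiple_of_eq, E2]).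
  assert (Hpar2 : Z.Even (mu2 - (r1 - 1))) by (exists (k1 - k2)%Z; lia).
  destruct (Z.Even_or_Odd u) as [[j Hj] | [j Hj]].
  - destruct (Z_le_gt_dec (2 * r1) (u - 2)).
    + exists mu2, r1; split; [|exact M2].
      split; [exact Hpar2|]; right; split; [exists j; exact Hj | left; lia].
    + destruct (Gamma_reduce_middle mu2 r1 ltac:(lia) Hmu2)
        as (mu3 & Hmu3 & Hmu3w & [k3 Hk3] & M3).
      exists mu3, r1; split; [| eapply Gamma_multiple_trans; eassumption].
      split; [destruct Hpar2 as [k Hk]; exists (k - k3)%Z; lia|].
      right; split; [exists j; exact Hj | right; lia].
  - exists mu2, r1; split; [|exact M2].
    split; [exact Hpar2|]; left; split; [exists j; exact Hj | lia].
Qed.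

End Symmetries.

Theorem mainTheorem11 (u v : Z)
  (hu : (2 <= u)%Z) (hv : (2 <= v)%Z) (hcop : Z.gcd u v = 1%Z) (huv : (u < 2 * v)%Z) :
  forall r mu : Z, (1 <= r <= u - 1)%Z -> Z.Even (mu - (r - 1)) ->
  exists l : list (Cx * Z * Z),
    (forall c m r', In (c, m, r') l -> inBk u v m r') /\
    (forall x y : R, 0 < y ->
       Gamma u v mu r x y =
       Csum (map (fun t => let '(c, m, r') := t in Cmul c (Gamma u v m r' x y)) l)).
Proof.
  intros r mu Hr Hpar.
  destruct (Gamma_reduce_to_Bk u v ltac:(lia) huv mu r Hr Hpar) as (m & r' & HB & c & E).
  exists ((c, m, r') :: nil); split.
  - intros c' m' r'' [H | []]; injection H as <- <- <-; exact HB.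
  - intros x y Hy; rewrite (E x y Hy); simpl; Cx_ring.
Qed.
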